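(* (i) Let $H$ be a primitive permutation group on a finite set $\Delta$ that is not cyclic of prime order, and let $K\le S_n$ ($n\ge2$) be a transitive group no cyclic subgroup of which is transitive. Then $H\wr K$ in the product action on $\Delta^n$ is a primitive group every element of which is an imprimitive permutation of $\Delta^n$. (ii) Let $m\ge1$ and let $G=S_3\wr C_2^m$ in the product action, where $C_2^m$ acts regularly on $2^m$ points; so $G$ is a primitive group of degree $3^{2^m}$. Then any subgroup of $G$ generated by fewer than $m$ elements preserves a partition of the $3^{2^m}$ points into blocks of equal size $b$ with $1<b<3^{2^m}$; in particular at least $m$ elements are needed to generate a primitive subgroup of $G$.
   Context: For $H\le{\rm Sym}(\Delta)$ and $K\le S_n$, $H\wr K$ in product action acts on $\Delta^n$ by applying $h_i\in H$ to the $i$-th coordinate and permuting coordinates by $\sigma\in K$. A permutation of a set $\Omega$ of size $N$ is imprimitive if it preserves a partition of $\Omega$ into blocks of equal size $b$ with $1<b<N$. *)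

From HB Require Import structures.
From mathcomp Require Import all_boot all_order all_fingroup all_solvable.
Set Implicit Arguments. Unset Strict Implicit. Unset Printing Implicit Defensive.

Local Open Scope group_scope.

(* Product action of H wr K on Delta^I (I a finite index set of coordinates):
   (h, s) sends x to the point whose i-th coordinate is h_i (x (s^-1 i)),
   i.e. h_i is applied in the i-th coordinate and coordinates are permuted
   by s. *)
Definition pa_fun (D I : finType) (h : {ffun I -> {perm D}}) (s : {perm I})
  (x : {ffun I -> D}) : {ffun I -> D} := [ffun i => h i (x (s^-1 i))].

Lemma pa_fun_inj (D I : finType) (h : {ffun I -> {perm D}}) (s : {perm I}) :
  injective (pa_fun h s).
Proof.
move=> x y /ffunP E; apply/ffunP => j.
have := E (s j); rewrite !ffunE permK => /perm_inj //.
Qed.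

Definition pa_perm (D I : finType) (h : {ffun I -> {perm D}}) (s : {perm I})
  : {perm {ffun I -> D}} := perm (@pa_fun_inj D I h s).

Definition wreath_pa (D I : finType) (H : {set {perm D}}) (K : {set {perm I}})
  : {set {perm {ffun I -> D}}} :=
  [set pa_perm h s | h in [set h : {ffun I -> {perm D}} | [forall i, h i \in H]],
                     s in K].

Definition preserves_equipartition (T : finType) (A : {set {perm T}}) : Prop :=
  exists (P : {set {set T}}) (b : nat),
    [/\ partition P [set: T], {in P, forall B : {set T}, #|B| = b}, 1 < b < #|T| &
        {in A, forall g : {perm T}, {in P, forall B : {set T}, [set g x | x in B] \in P}}].

Definition imprimitive_perm (T : finType) (g : {perm T}) : Prop :=
  exists (P : {set {set T}}) (b : nat),
    [/\ partition P [set: T], {in P, forall B : {set T}, #|B| = b}, 1 < b < #|T| &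
        {in P, forall B : {set T}, [set g x | x in B] \in P}].

(* The regular action of C_2^m on 2^m points: translations of the
   elementary abelian group {ffun 'I_m -> bool} (addition = xor). *)
Definition xor_fun m (v : {ffun 'I_m -> bool}) (x : {ffun 'I_m -> bool})
  : {ffun 'I_m -> bool} := [ffun i => x i (+) v i].

Lemma xor_fun_inj m (v : {ffun 'I_m -> bool}) : injective (xor_fun v).
Proof.
move=> x y /ffunP E; apply/ffunP => i; have := E i; rewrite !ffunE.
by case: (x i); case: (y i); case: (v i).
Qed.

Definition xor_perm m (v : {ffun 'I_m -> bool}) : {perm {ffun 'I_m -> bool}} :=
  perm (@xor_fun_inj m v).

Definition C2m_regular m : {set {perm {ffun 'I_m -> bool}}} :=
  [set xor_perm v | v : {ffun 'I_m -> bool}].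

(* If a top component s generates an intransitive cyclic group, an orbit J of
   <[s]> on coordinates is a proper nonempty set of coordinates invariant under
   s, so the fibres of the projection Delta^I -> Delta^J form a nontrivial
   equipartition preserved by every (h, s).  In (ii) this applies to all
   generators at once: fewer than m elements of C_2^m generate a subgroup of
   order less than 2^m, which cannot be transitive on 2^m points.

   Primitivity: the stabiliser of a constant point (a, ..., a) contains the top
   group K and the base elements with entries in H_a.  A larger subgroup M
   contains a base element h with h_j a <> a.  As H is primitive and not cyclic
   of prime order, H_a is self-normalising, so a commutator [h_j, c] with
   c in H_a leaves H_a; by maximality of H_a, M then contains all of H in
   coordinate j, and by transitivity of K in every coordinate. *)

From HB Require Import structures.
From mathcomp Require Import all_boot all_order all_fingroup all_solvable.
From mathcomp Require Import zify.

Set Implicit Arguments. Unset Strict Implicit. Unset Printing Implicit Defensive.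

Local Open Scope group_scope.

Section ProductAction.

Variables D I : finType.
Implicit Types (h : {ffun I -> {perm D}}) (s : {perm I}) (x : {ffun I -> D}).

Lemma pa_permE h s x : pa_perm h s x = [ffun i => h i (x (s^-1 i))].
Proof. by rewrite permE. Qed.

Lemma pa_permM h s h' s' :
  pa_perm h s * pa_perm h' s' = pa_perm [ffun i => h (s'^-1 i) * h' i] (s * s').
Proof.
apply/permP => x; rewrite permM !pa_permE; apply/ffunP => i.
by rewrite !ffunE permM invMg permM.
Qed.

Definition pa_top s : {perm {ffun I -> D}} := pa_perm [ffun=> 1] s.
Definition pa_base h : {perm {ffun I -> D}} := pa_perm h 1.
Definition pa_single (j : I) (c : {perm D}) : {ffun I -> {perm D}} :=
  [ffun i => if i == j then c else 1].

Lemma pa_perm_top_base h s : pa_perm h s = pa_top s * pa_base h.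
Proof. by rewrite pa_permM mulg1; congr pa_perm; apply/ffunP => i; rewrite !ffunE mul1g. Qed.

Lemma pa_topV s : (pa_top s)^-1 = pa_top s^-1.
Proof.
apply/eqP; rewrite eq_invg_mul /pa_top pa_permM mulgV; apply/eqP/permP => x.
by rewrite pa_permE perm1; apply/ffunP => i; rewrite !ffunE mulg1 invg1 !perm1.
Qed.

Lemma pa_baseM h h' : pa_base h * pa_base h' = pa_base [ffun i => h i * h' i].
Proof.
by rewrite /pa_base pa_permM mulg1 invg1; congr pa_perm; apply/ffunP => i; rewrite !ffunE perm1.
Qed.

Lemma pa_base1 : pa_base [ffun=> 1] = 1.
Proof.
by apply/permP => x; rewrite pa_permE perm1; apply/ffunP => i; rewrite !ffunE invg1 !perm1.
Qed.

Lemma pa_baseV h : (pa_base h)^-1 = pa_base [ffun i => (h i)^-1].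
Proof.
apply/eqP; rewrite eq_invg_mul pa_baseM -pa_base1; apply/eqP; congr pa_base.
by apply/ffunP => i; rewrite !ffunE mulgV.
Qed.

Lemma pa_baseJ h s : pa_base h ^ pa_top s = pa_base [ffun i => h (s^-1 i)].
Proof.
rewrite conjgE pa_topV /pa_top /pa_base !pa_permM mul1g mulVg; congr pa_perm.
by apply/ffunP => i; rewrite !ffunE mulg1 mul1g.
Qed.

Lemma pa_singleJ j c s : pa_base (pa_single j c) ^ pa_top s = pa_base (pa_single (s j) c).
Proof.
rewrite pa_baseJ; congr pa_base; apply/ffunP => i; rewrite !ffunE.
by rewrite -(inj_eq (@perm_inj _ s)) permKV.
Qed.

Lemma pa_singleM j c c' :
  pa_base (pa_single j c) * pa_base (pa_single j c') = pa_base (pa_single j (c * c')).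
Proof.
by rewrite pa_baseM; congr pa_base; apply/ffunP => i; rewrite !ffunE; case: eqP; rewrite ?mulg1.
Qed.

Lemma pa_single1 j : pa_base (pa_single j 1) = 1.
Proof. by rewrite -pa_base1; congr pa_base; apply/ffunP => i; rewrite !ffunE if_same. Qed.

Lemma pa_single_commg h j c :
  [~ pa_base h, pa_base (pa_single j c)] = pa_base (pa_single j [~ h j, c]).
Proof.
rewrite /commg /conjg !pa_baseV !pa_baseM; congr pa_base.
apply/ffunP => i; rewrite !ffunE; case: eqP => [-> //|_].
by rewrite invg1 mul1g mulg1 mulVg.
Qed.

Lemma pa_top_const s (a : D) : pa_top s [ffun=> a] = [ffun=> a].
Proof. by rewrite pa_permE; apply/ffunP => i; rewrite !ffunE perm1. Qed.

End ProductAction.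

Lemma wreath_paS (D I : finType) (H H' : {set {perm D}}) (K K' : {set {perm I}}) :
  H \subset H' -> K \subset K' -> wreath_pa H K \subset wreath_pa H' K'.
Proof.
move=> sHH' sKK'; apply: imset2S => //; apply/subsetP => h.
by rewrite !inE => /forallP hH; apply/forallP => i; apply: (subsetP sHH').
Qed.

Section WreathProduct.

Variables (D I : finType) (H : {group {perm D}}) (K : {group {perm I}}).

Lemma wreathP (g : {perm {ffun I -> D}}) :
  reflect (exists h : {ffun I -> {perm D}}, exists2 s, s \in K &
             (forall i, h i \in H) /\ g = pa_perm h s)
          (g \in wreath_pa H K).
Proof.
apply: (iffP imset2P) => [[h s] | [h [s sK [hH ->]]]].
  by rewrite inE => /forallP hH sK ->; exists h, s.
by exists h s => //; rewrite inE; apply/forallP.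
Qed.

Lemma pa_perm_wreath (h : {ffun I -> {perm D}}) s :
  (forall i, h i \in H) -> s \in K -> pa_perm h s \in wreath_pa H K.
Proof. by move=> hH sK; apply/wreathP; exists h, s. Qed.

Lemma pa_top_wreath s : s \in K -> pa_top D s \in wreath_pa H K.
Proof. by move=> sK; apply: pa_perm_wreath => // i; rewrite ffunE group1. Qed.

Lemma pa_base_wreath (h : {ffun I -> {perm D}}) :
  (forall i, h i \in H) -> pa_base h \in wreath_pa H K.
Proof. by move=> hH; apply: pa_perm_wreath. Qed.

Lemma wreath_group_set : group_set (wreath_pa H K).
Proof.
apply/group_setP; split.
  by rewrite -(pa_base1 D I); apply: pa_base_wreath => i; rewrite ffunE group1.
move=> _ _ /wreathP[h [s sK [hH ->]]] /wreathP[h' [s' sK' [hH' ->]]].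
by rewrite pa_permM; apply: pa_perm_wreath => [i|]; rewrite ?ffunE groupM.
Qed.

Canonical wreath_group := Group wreath_group_set.

Lemma wreath_transitive :
  [transitive H, on [set: D] | 'P] ->
  [transitive wreath_pa H K, on [set: {ffun I -> D}] | 'P].
Proof.
move=> /imsetP[a _ trH]; apply/imsetP; exists [ffun=> a] => //.
apply/setP => y; rewrite in_setT; apply/esym/imsetP.
have /fin_all_exists2[c cH cy] i : exists2 c, c \in H & c a = y i.
  have /orbitP[c cH <-] : y i \in orbit 'P H a by rewrite -trH.
  by exists c.
exists (pa_base [ffun i => c i]); first by apply: pa_base_wreath => i; rewrite ffunE.
by apply/ffunP => i; rewrite /= /aperm pa_permE !ffunE.
Qed.

End WreathProduct.

Lemma prime_of_maximal_eq1 (gT : finGroupType) (G : {group gT}) :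
  G :!=: 1 -> maximal_eq 1 G -> prime #|G|.
Proof.
rewrite -cardG_gt1 => ntG /maximal_eqP[_ maxG].
have [x xG ox] := Cauchy (pdiv_prime ntG) (pdiv_dvd #|G|).
case: (maxG <[x]>%G) => [||/= x1|/= <-]; rewrite ?sub1G ?cycle_subG //.
  by move: (pdiv_prime ntG); rewrite -ox /order x1 cards1.
by rewrite -/(order x) ox pdiv_prime.
Qed.

Section PrimitiveStabilizer.

Variables (D : finType) (H : {group {perm D}}) (a : D).
Hypothesis primH : [primitive H, on [set: D] | 'P].

Lemma normal_astab1_prime_cyclic h :
  h \in H -> h \in 'N('C_H[a | 'P]) -> h a != a -> cyclic H && prime #|H|.
Proof.
move=> hH nHah ha; set Ha := 'C_H[a | 'P].
have [trH _] := andP primH.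
have maxHa : maximal_eq Ha H by rewrite -(trans_prim_astab (in_setT a) trH).
have /maximal_eqP[_ maxHaP] := maxHa.
have ntH : H :!=: 1.
  by apply: contraNneq ha => H1; move: hH; rewrite H1 => /set1P ->; rewrite perm1.
have nHaH : H \subset 'N(Ha).
  have sHaN : Ha \subset 'N_H(Ha) by rewrite subsetI subsetIl normG.
  case: (maxHaP _ sHaN (subsetIl _ _)) => [NHa | <-]; last exact: subsetIr.
  have : h \in 'N_H(Ha) by rewrite inE hH.
  by rewrite NHa => /setIP[_ /astab1P ha1]; case/eqP: ha.
have Ha1 : Ha :=: 1.
  have nsHaH : Ha <| H by rewrite /normal subsetIl nHaH.
  apply/trivgP; case: (prim_trans_norm primH nsHaH) => [cHa | trHa].
    exact: subset_trans cHa (perm_faithful H).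
  have /orbitP[c /setIP[_ /astab1P ca] hca] : h a \in orbit 'P Ha a.
    by rewrite (atransP trHa) ?inE.
  by move: ha; rewrite -hca ca eqxx.
have pH : prime #|H| by apply: prime_of_maximal_eq1; rewrite // -Ha1.
by rewrite prime_cyclic.
Qed.

Lemma exists_commg_notin_astab1 h :
  ~~ (cyclic H && prime #|H|) -> h \in H -> h a != a ->
  exists2 c, c \in 'C_H[a | 'P] & [~ h, c] \notin 'C_H[a | 'P].
Proof.
move=> nHp hH ha; set Ha := 'C_H[a | 'P].
have [/exists_inP // | ] := boolP [exists c in Ha, [~ h, c] \notin Ha].
rewrite negb_exists_in => /forall_inP commHa; case/negP: nHp.
apply: normal_astab1_prime_cyclic hH _ ha; apply/normP/eqP.
rewrite eqEcard cardJg leqnn andbT; apply/subsetP => _ /imsetP[c cHa ->].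
have -> : c ^ h = [~ h, c^-1] * c by rewrite commgEr invgK mulgKV.
by rewrite groupM // -[_ \in _]negbK commHa ?groupV.
Qed.

End PrimitiveStabilizer.

Lemma pa_base_of_singles (D I : finType) (M : {group {perm {ffun I -> D}}})
    (h : {ffun I -> {perm D}}) :
  (forall i, pa_base (pa_single i (h i)) \in M) -> pa_base h \in M.
Proof.
move=> hM; pose hr (r : seq I) := [ffun i => if i \in r then h i else 1].
suff /(_ _ (enum_uniq I)) : forall r, uniq r -> pa_base (hr r) \in M.
  by congr (pa_base _ \in M); apply/ffunP => i; rewrite ffunE mem_enum.
elim=> [_ | j r IHr /= /andP[jr ur]].
  by rewrite (_ : hr [::] = [ffun=> 1]) ?pa_base1 //; apply/ffunP => i; rewrite !ffunE.
have -> : pa_base (hr (j :: r)) = pa_base (pa_single j (h j)) * pa_base (hr r).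
  rewrite pa_baseM; congr pa_base; apply/ffunP => i; rewrite !ffunE in_cons.
  by case: eqP => [->|_]; rewrite ?(negbTE jr) ?mulg1 ?mul1g.
by rewrite groupM ?IHr.
Qed.

Section WreathPrimitive.

Variables (D I : finType) (H : {group {perm D}}) (K : {group {perm I}}) (a : D).
Hypotheses (primH : [primitive H, on [set: D] | 'P])
           (nHp : ~~ (cyclic H && prime #|H|))
           (trK : [transitive K, on [set: I] | 'P]).

Local Notation G := (wreath_group H K).
Local Notation a_ := [ffun _ : I => a].

Lemma pa_top_astab1 s : s \in K -> pa_top D s \in 'C_G[a_ | 'P].
Proof. by move=> sK; rewrite inE pa_top_wreath //; apply/astab1P; apply: pa_top_const. Qed.

Lemma pa_base_astab1 (h : {ffun I -> {perm D}}) :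
  (forall i, h i \in 'C_H[a | 'P]) -> pa_base h \in 'C_G[a_ | 'P].
Proof.
move=> hHa; rewrite inE pa_base_wreath => [|i]; last by case/setIP: (hHa i).
apply/astab1P; apply/ffunP => i; rewrite /= /aperm pa_permE !ffunE.
by case/setIP: (hHa i) => _ /astab1P.
Qed.

Variable M : {group {perm {ffun I -> D}}}.
Hypotheses (sCM : 'C_G[a_ | 'P] \subset M) (sMG : M \subset G).

Lemma overgroup_single_coord g :
  g \in M -> g \notin 'C_G[a_ | 'P] ->
  exists j, forall x, x \in H -> pa_base (pa_single j x) \in M.
Proof.
move=> gM gnC; have /wreathP[h [s sK [hH def_g]]] := subsetP sMG g gM.
have hM : pa_base h \in M.
  have -> : pa_base h = (pa_top D s)^-1 * g by rewrite def_g pa_perm_top_base mulKg.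
  by rewrite groupM ?groupV // (subsetP sCM) ?pa_top_astab1.
have [j hja] : exists j, h j a != a.
  apply/existsP; apply: contraR gnC => /existsPn hfix.
  rewrite def_g pa_perm_top_base groupM ?pa_top_astab1 ?pa_base_astab1 // => i.
  by rewrite inE hH; apply/astab1P; exact/eqP/negPn/hfix.
have [c cHa notHa] := exists_commg_notin_astab1 primH nHp (hH j) hja.
pose L := [set x in H | pa_base (pa_single j x) \in M].
have gsL : group_set L.
  apply/group_setP; split=> [|x y]; first by rewrite inE group1 pa_single1 group1.
  by rewrite !inE => /andP[xH xM] /andP[yH yM]; rewrite groupM // -pa_singleM groupM.
have sHaL : 'C_H[a | 'P] \subset Group gsL.
  apply/subsetP => x xHa; rewrite inE (subsetP (subsetIl _ _) x xHa) /=.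
  by apply: (subsetP sCM); apply: pa_base_astab1 => i; rewrite ffunE; case: eqP.
have [trH _] := andP primH.
have := primH; rewrite (trans_prim_astab (in_setT a) trH) => /maximal_eqP[_ maxHa].
case: (maxHa _ sHaL) => [|/= LHa|/= LH]; first by apply/subsetP => x; rewrite inE => /andP[].
  suff : [~ h j, c] \in L by rewrite LHa (negbTE notHa).
  rewrite inE groupR ?(subsetP (subsetIl _ _) c cHa) //=.
  rewrite -pa_single_commg groupR // (subsetP sCM) // pa_base_astab1 // => i.
  by rewrite ffunE; case: eqP.
by exists j => x; rewrite -LH inE => /andP[].
Qed.

Lemma overgroup_base j :
  (forall x, x \in H -> pa_base (pa_single j x) \in M) ->
  forall h : {ffun I -> {perm D}}, (forall i, h i \in H) -> pa_base h \in M.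
Proof.
move=> jM h hH; apply: pa_base_of_singles => i.
have [t tK ->] := atransP2 trK (in_setT j) (in_setT i).
by rewrite -pa_singleJ groupJ ?jM // (subsetP sCM) ?pa_top_astab1.
Qed.

End WreathPrimitive.

Lemma wreath_primitive (D I : finType) (H : {group {perm D}}) (K : {group {perm I}}) :
  [primitive H, on [set: D] | 'P] -> ~~ (cyclic H && prime #|H|) ->
  [transitive K, on [set: I] | 'P] ->
  [primitive wreath_pa H K, on [set: {ffun I -> D}] | 'P].
Proof.
move=> primH nHp trK; have [trH _] := andP primH; have /imsetP[a _ _] := trH.
rewrite (trans_prim_astab (in_setT [ffun=> a]) (wreath_transitive K trH)).
apply/maximal_eqP; split=> [|M sCM sMG]; first exact: subsetIl.
have [sMC | /subsetPn[g gM gnC]] := boolP (M \subset 'C_(wreath_pa H K)[[ffun=> a] | 'P]).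
  by left; apply/eqP; rewrite eqEsubset sMC sCM.
have [j jM] := overgroup_single_coord primH nHp sCM sMG gM gnC.
right; apply/eqP; rewrite eqEsubset sMG; apply/subsetP => _ /wreathP[h [s sK [hH ->]]].
rewrite pa_perm_top_base groupM ?(overgroup_base trK sCM jM hH) //.
exact/(subsetP sCM)/pa_top_astab1.
Qed.

Lemma perm_acts_setsP (T : finType) (A : {set {perm T}}) (P : {set {set T}}) :
  reflect {in A, forall g : {perm T}, {in P, forall B : {set T}, [set g x | x in B] \in P}}
          [acts A, on P | 'P^*].
Proof.
apply: (iffP subsetP) => [nPA g gA B BP | presP g gA].
  by have := nPA g gA; rewrite !inE => /subsetP/(_ B BP); rewrite inE.
by rewrite !inE; apply/subsetP => B BP; rewrite inE; apply: presP.
Qed.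

Lemma preserves_equipartitionS (T : finType) (A B : {set {perm T}}) :
  A \subset B -> preserves_equipartition B -> preserves_equipartition A.
Proof.
move=> sAB [P [b [pP sz bb /perm_acts_setsP nPB]]]; exists P, b; split=> //.
exact/perm_acts_setsP/(subset_trans sAB).
Qed.

Lemma preserves_equipartition_gen (T : finType) (A : {set {perm T}}) :
  preserves_equipartition A -> preserves_equipartition <<A>>.
Proof.
move=> [P [b [pP sz bb /perm_acts_setsP nPA]]]; exists P, b; split=> //.
by apply/perm_acts_setsP; rewrite gen_subG.
Qed.

Lemma imprimitive_perm_of_set1 (T : finType) (g : {perm T}) :
  preserves_equipartition [set g] -> imprimitive_perm g.
Proof. by move=> [P [b [pP sz bb nPg]]]; exists P, b; split=> //; apply: nPg; rewrite inE. Qed.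

Lemma preserves_equipartition_imprimitive (T : finType) (A : {group {perm T}}) :
  preserves_equipartition A -> ~~ [primitive A, on [set: T] | 'P].
Proof.
move=> [P [b [pP sz /andP[b_gt1 b_lt] /perm_acts_setsP nPA]]].
rewrite negb_and negbK; apply/orP; right; apply/existsP; exists P.
rewrite /imprimitivity_system pP nPA.
have := card_uniform_partition sz pP; rewrite cardsT in b_lt *.
by move=> cardT; rewrite cardT in b_lt *; apply/andP; split; nia.
Qed.

Section CoordinateBlocks.

Variables (D I : finType) (J : {set I}).
Implicit Types x y : {ffun I -> D}.

Definition coord_agree : rel {ffun I -> D} := fun x y => [forall j in J, x j == y j].
Definition coord_block x := [set y in [set: {ffun I -> D}] | coord_agree x y].
Definition coord_partition := [set coord_block x | x in [set: {ffun I -> D}]].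

Lemma coord_partitionP : partition coord_partition [set: {ffun I -> D}].
Proof.
apply: equivalence_partitionP => x y z _ _ _; split; first exact/forall_inP.
move=> /forall_inP xy; apply/forall_inP/forall_inP => yz j jJ.
  by rewrite -(eqP (xy j jJ)) yz.
by rewrite (eqP (xy j jJ)) yz.
Qed.

Lemma card_coord_block_le x y : #|coord_block x| <= #|coord_block y|.
Proof.
pose f (z : {ffun I -> D}) : {ffun I -> D} := [ffun i => if i \in J then y i else z i].
have agree_eq z j : z \in coord_block x -> j \in J -> z j = x j.
  by rewrite !inE /coord_agree => /forall_inP xz /xz /eqP.
rewrite -(@card_in_imset _ _ f) => [|z z' zx z'x /ffunP fz].
  apply/subset_leq_card/subsetP => _ /imsetP[z _ ->]; rewrite !inE /coord_agree.
  by apply/forall_inP => j jJ; rewrite ffunE jJ.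
apply/ffunP => i; have := fz i; rewrite !ffunE.
by case: ifP => // iJ _; rewrite !agree_eq.
Qed.

Lemma card_coord_block x y : #|coord_block x| = #|coord_block y|.
Proof. by apply/eqP; rewrite eqn_leq !card_coord_block_le. Qed.

Lemma card_coord_block_bounds x :
  1 < #|D| -> J != set0 -> J != setT ->
  1 < #|coord_block x| < #|{ffun I -> D}|.
Proof.
move=> D_gt1 /set0Pn[j1 j1J] JT.
have [i1 i1J] : exists i1, i1 \notin J.
  apply/existsP; apply: contraR JT => /existsPn/= notJ.
  by apply/eqP/setP => i; rewrite inE (negbNE (notJ i)).
have other (e : D) : exists d, d != e.
  have /card_gt1P[d1 [d2 [_ _ d12]]] := D_gt1.
  by case: (eqVneq d1 e) => [<-|]; [exists d2; rewrite eq_sym | exists d1].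
pose upd k := [ffun i => if i == k then xchoose (other (x k)) else x i].
have upd_k k : upd k k != x k by rewrite ffunE eqxx (xchooseP (other _)).
have upd_block k : (upd k \in coord_block x) = (k \notin J).
  rewrite !inE /coord_agree; apply/forall_inP/idP => [agr | kJ j jJ].
    by apply: contraNN (upd_k k) => /agr /eqP ->.
  have jk : j != k by apply: contraNneq kJ => <-.
  by rewrite ffunE (negbTE jk).
apply/andP; split.
  apply/card_gt1P; exists x, (upd i1); rewrite upd_block i1J !inE.
  by split=> //; [exact/forall_inP | apply: contraNneq (upd_k i1) => <-].
rewrite -cardsT; apply/proper_card; rewrite properT.
by apply: contraTneq j1J => blockT; rewrite -upd_block blockT inE.
Qed.

Lemma coord_block_pa_perm (h : {ffun I -> {perm D}}) (s : {perm I}) x :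
  {in J, forall i, s^-1 i \in J} ->
  [set pa_perm h s y | y in coord_block x] = coord_block (pa_perm h s x).
Proof.
move=> sJ; apply/eqP; rewrite eqEcard card_imset; last exact: perm_inj.
rewrite (card_coord_block _ x) leqnn andbT.
apply/subsetP => _ /imsetP[y xy ->]; rewrite !inE /coord_agree.
apply/forall_inP => j jJ; rewrite !pa_permE !ffunE.
by move: xy; rewrite !inE => /forall_inP/(_ _ (sJ j jJ))/eqP ->.
Qed.

End CoordinateBlocks.

Lemma intransitive_wreath_equipartition (D I : finType) (L : {group {perm I}}) (i0 : I) :
  1 < #|D| -> ~~ [transitive L, on [set: I] | 'P] ->
  preserves_equipartition (wreath_pa [set: {perm D}] L).
Proof.
move=> D_gt1 ntrL; pose J := orbit 'P L i0.
have J0 : J != set0 by apply/set0Pn; exists i0; apply: orbit_refl.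
have JT : J != setT.
  by apply: contra ntrL => /eqP JT; apply/imsetP; exists i0; rewrite // -JT.
have sJ s : s \in L -> {in J, forall i, s^-1 i \in J}.
  by move=> sL i iJ; apply: orbit_trans iJ; apply: mem_orbit; rewrite groupV.
have /card_gt0P[d _] := ltnW D_gt1.
exists (coord_partition D J), #|coord_block J [ffun=> d]|; split.
- exact: coord_partitionP.
- by move=> _ /imsetP[x _ ->]; apply: card_coord_block.
- exact: card_coord_block_bounds.
move=> _ /wreathP[h [s sL [_ ->]]] _ /imsetP[x _ ->].
rewrite coord_block_pa_perm; last exact: sJ.
exact: imset_f.
Qed.

Lemma card_gen_involutions (gT : finGroupType) (S : {set gT}) :
  abelian S -> {in S, forall x, x ^+ 2 = 1} -> (#|<<S>>| <= 2 ^ #|S|)%N.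
Proof.
have [n] := ubnP #|S|; elim: n S => // n IH S S_lt cSS invS.
have [-> | [x xS]] := set_0Vmem S; first by rewrite gen0 cards1 cards0.
have xS' : x \notin S :\ x by rewrite !inE eqxx.
have cSS' : abelian (S :\ x) by apply: abelianS cSS; apply: subsetDl.
have invS' : {in S :\ x, forall y, y ^+ 2 = 1} by move=> y /setD1P[_ /invS].
have S'_lt : (#|S :\ x| < n)%N by rewrite -ltnS (leq_trans _ S_lt) // (cardsD1 x S) xS.
rewrite -(setD1K xS) cardsU1 xS' add1n expnS.
rewrite -[<<_>>]/([set x] <*> (S :\ x)) -joing_idl -joing_idr cent_joinEl; last first.
  rewrite gen_subG sub1set /= cent_gen (subsetP (centS (subsetDl S [set x]))) //.
  exact: (subsetP cSS).
have ox : (#|<<[set x]>>| <= 2)%N.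
  by apply: dvdn_leq => //; rewrite -[#|_|]/#[x] order_dvdn invS.
apply: leq_trans (_ : #|<<[set x]>>| * #|<<S :\ x>>| <= _)%N; last first.
  by rewrite leq_mul ?IH.
by rewrite mul_cardG leq_pmulr ?cardG_gt0.
Qed.

Lemma card_le_of_transitive (aT : finGroupType) (T : finType) (A : {group aT})
    (to : {action aT &-> T}) :
  [transitive A, on [set: T] | to] -> (#|T| <= #|A|)%N.
Proof. by case/imsetP=> x _ defT; rewrite -cardsT defT leq_imset_card. Qed.

Lemma wreath_tops (D I : finType) (H : {group {perm D}}) (K : {group {perm I}})
    (X : {set {perm {ffun I -> D}}}) :
  X \subset wreath_pa H K ->
  exists S : {set {perm I}},
    [/\ S \subset K, (#|S| <= #|X|)%N & X \subset wreath_pa H <<S>>].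
Proof.
move=> sXW.
have /fin_all_exists[top topP] (g : {perm {ffun I -> D}}) : exists s, g \in X ->
    s \in K /\ exists2 h : {ffun I -> {perm D}}, (forall i, h i \in H) & g = pa_perm h s.
  have [gX | _] := boolP (g \in X); last by exists 1.
  by have /wreathP[h [s sK [hH ->]]] := subsetP sXW g gX; exists s => _; split=> //; exists h.
exists [set top g | g in X]; split.
- by apply/subsetP => _ /imsetP[g gX ->]; case: (topP g gX).
- exact: leq_imset_card.
apply/subsetP => g gX; have [_ [h hH ->]] := topP g gX.
by apply: (@pa_perm_wreath _ _ _ <<_>>%G) => //; apply/mem_gen/imset_f.
Qed.

Section RegularC2m.

Variable m : nat.
Implicit Types v w : {ffun 'I_m -> bool}.

Lemma xor_permM v w : xor_perm v * xor_perm w = xor_perm [ffun i => v i (+) w i].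
Proof.
by apply/permP => x; rewrite permM !permE; apply/ffunP => i; rewrite !ffunE addbA.
Qed.

Lemma xor_perm0 : xor_perm [ffun=> false] = 1 :> {perm {ffun 'I_m -> bool}}.
Proof. by apply/permP => x; rewrite perm1 permE; apply/ffunP => i; rewrite !ffunE addbF. Qed.

Lemma C2m_group_set : group_set (C2m_regular m).
Proof.
apply/group_setP; split=> [|_ _ /imsetP[v _ ->] /imsetP[w _ ->]].
  by rewrite -xor_perm0; apply: imset_f.
by rewrite xor_permM; apply: imset_f.
Qed.

Canonical C2m_group := Group C2m_group_set.

Lemma C2m_abelian : abelian (C2m_regular m).
Proof.
apply/centsP => _ /imsetP[v _ ->] _ /imsetP[w _ ->].
by rewrite /commute !xor_permM; congr xor_perm; apply/ffunP => i; rewrite !ffunE addbC.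
Qed.

Lemma C2m_involution : {in C2m_regular m, forall g, g ^+ 2 = 1}.
Proof.
move=> _ /imsetP[v _ ->]; rewrite expgS expg1 xor_permM -xor_perm0; congr xor_perm.
by apply/ffunP => i; rewrite !ffunE addbb.
Qed.

Lemma C2m_transitive : [transitive C2m_regular m, on [set: {ffun 'I_m -> bool}] | 'P].
Proof.
apply/imsetP; exists [ffun=> false] => //; apply/setP => y; rewrite in_setT; apply/esym/imsetP.
exists (xor_perm y); first exact: imset_f.
by rewrite /= /aperm permE; apply/ffunP => i; rewrite !ffunE.
Qed.

Lemma few_generators_equipartition (D : finType) (H : {group {perm D}})
    (X : {set {perm {ffun {ffun 'I_m -> bool} -> D}}}) :
  1 < #|D| -> X \subset wreath_pa H (C2m_regular m) -> #|X| < m ->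
  preserves_equipartition <<X>>.
Proof.
move=> D_gt1 sXW X_lt; have [S [sSC S_le sXS]] := wreath_tops sXW.
have ntrS : ~~ [transitive <<S>>, on [set: {ffun 'I_m -> bool}] | 'P].
  apply/negP => /card_le_of_transitive; apply/negP; rewrite -ltnNge.
  rewrite card_ffun card_bool card_ord; apply: leq_ltn_trans (_ : 2 ^ #|S| < _).
    exact/card_gen_involutions/(sub_in1 (subsetP sSC) C2m_involution)/(abelianS sSC C2m_abelian).
  by rewrite ltn_exp2l // (leq_ltn_trans S_le X_lt).
apply/preserves_equipartition_gen/(preserves_equipartitionS (subset_trans sXS _)).
  exact: wreath_paS (subsetT H) (subxx _).
exact: intransitive_wreath_equipartition [ffun=> false] D_gt1 ntrS.
Qed.

End RegularC2m.

Lemma S3_primitive : [primitive [set: {perm 'I_3}], on [set: 'I_3] | 'P].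
Proof.
have trS3 : [transitive [set: {perm 'I_3}], on [set: 'I_3] | 'P].
  apply/imsetP; exists ord0 => //; apply/setP => y; rewrite in_setT; apply/esym/imsetP.
  by exists (tperm ord0 y) => //; rewrite /= /aperm tpermL.
rewrite (trans_prim_astab (in_setT ord0) trS3) /maximal_eq.
rewrite (p_index_maximal (subsetIl _ _)) ?orbT //.
by rewrite -card_orbit (atransP trS3) ?cardsT ?card_ord.
Qed.

Lemma S3_not_prime_cyclic : ~~ (cyclic [set: {perm 'I_3}] && prime #|[set: {perm 'I_3}]|).
Proof. by rewrite cardsT card_Sn andbF. Qed.

Lemma wreath_imprimitive_perm (D I : finType) (H : {group {perm D}}) (K : {group {perm I}})
    (i0 : I) :
  1 < #|D| ->
  (forall C : {group {perm I}}, C \subset K -> cyclic C -> ~~ [transitive C, on [set: I] | 'P]) ->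
  {in wreath_pa H K, forall g, imprimitive_perm g}.
Proof.
move=> D_gt1 ntrK _ /wreathP[h [s sK [_ ->]]]; apply: imprimitive_perm_of_set1.
have ntrs : ~~ [transitive <[s]>, on [set: I] | 'P] by rewrite ntrK ?cycle_subG ?cycle_cyclic.
apply: preserves_equipartitionS (intransitive_wreath_equipartition i0 D_gt1 ntrs).
by rewrite sub1set; apply: pa_perm_wreath => [i|]; rewrite ?inE ?cycle_id.
Qed.

Local Close Scope group_scope.

Theorem mainTheorem17 :
  (* (i) *)
  (forall (D : finType) (H : {group {perm D}}) (n : nat) (K : {group 'S_n}),
     1 < #|D| ->
     [primitive H, on [set: D] | 'P] ->
     ~~ (cyclic H && prime #|H|) ->
     2 <= n ->
     [transitive K, on [set: 'I_n] | 'P] ->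
     (forall C : {group 'S_n}, C \subset K -> cyclic C ->
        ~~ [transitive C, on [set: 'I_n] | 'P]) ->
     [/\ group_set (wreath_pa H K),
         [primitive wreath_pa H K, on [set: {ffun 'I_n -> D}] | 'P] &
         {in wreath_pa H K, forall g, imprimitive_perm g}])
  /\
  (* (ii) *)
  (forall m : nat, 1 <= m ->
     let G := wreath_pa [set: {perm 'I_3}] (C2m_regular m) in
     [/\ #|{ffun {ffun 'I_m -> bool} -> 'I_3}| = 3 ^ (2 ^ m),
         group_set G,
         [primitive G, on [set: {ffun {ffun 'I_m -> bool} -> 'I_3}] | 'P],
         (forall X : {set {perm {ffun {ffun 'I_m -> bool} -> 'I_3}}},
            X \subset G -> #|X| < m -> preserves_equipartition <<X>>%g) &
         (forall X : {set {perm {ffun {ffun 'I_m -> bool} -> 'I_3}}},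
            X \subset G ->
            [primitive <<X>>%g, on [set: {ffun {ffun 'I_m -> bool} -> 'I_3}] | 'P] ->
            m <= #|X|)]).
Proof.
split=> [D H n K D_gt1 primH nHp n_ge2 trK ntrK | m _ G].
  split; [exact: wreath_group_set | exact: wreath_primitive |].
  exact: wreath_imprimitive_perm (Ordinal (ltnW n_ge2)) D_gt1 ntrK.
have few (X : {set {perm {ffun {ffun 'I_m -> bool} -> 'I_3}}}) :
    X \subset G -> #|X| < m -> preserves_equipartition <<X>>%g.
  by apply: few_generators_equipartition; rewrite card_ord.
split=> //.
- by rewrite card_ffun card_ord card_ffun card_bool card_ord.
- exact: wreath_group_set.
- exact: wreath_primitive S3_primitive S3_not_prime_cyclic (C2m_transitive m).
move=> X sXG; apply: contraTleq => X_lt.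
exact: (@preserves_equipartition_imprimitive _ <<X>>%G) (few X sXG X_lt).
Qed.
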